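(* Let $K$ be a field and $P$ an arbitrary poset. Let $\alpha\in FI(P)$ be an idempotent ($\alpha^2=\alpha$), and let $\varepsilon\in FI(P)$ be the diagonal element with $\varepsilon(x,x)=\alpha(x,x)$ for all $x\in P$. Then $\varepsilon$ is an idempotent and there is an invertible $\beta\in FI(P)$ with $\alpha=\beta^{-1}\varepsilon\beta$.
   Context: $K$ is a field, $P$ an arbitrary poset. $I(P)$ is the set of functions $\alpha$ assigning to each pair $x\le y$ in $P$ a value $\alpha(x,y)\in K$. An element $\alpha\in I(P)$ is a finitary series if for all $x<y$ in $P$ there are only finitely many pairs $(u,v)$ with $x\le u<v\le y$ and $\alpha(u,v)\neq0$; $FI(P)$ is the set of finitary series. $FI(P)$ is an associative $K$-algebra under pointwise addition and convolution $(\alpha\beta)(x,y)=\sum_{x\le z\le y}\alpha(x,z)\beta(z,y)$, with identity $\delta$ given by $\delta(x,y)=1$ if $x=y$ and $0$ otherwise. An element $\alpha\in FI(P)$ is diagonal if $\alpha(x,y)=0$ whenever $x\neq y$. *)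

From HB Require Import structures.
From mathcomp Require Import all_boot all_order all_algebra.
From Stdlib Require Import ClassicalEpsilon.
Set Implicit Arguments. Unset Strict Implicit. Unset Printing Implicit Defensive.
Import Order.TTheory GRing.Theory.
Local Open Scope ring_scope.

Section FI.
Variables (K : fieldType) (d : Order.disp_t) (P : porderType d).

(* Elements of I(P) are represented as functions P -> P -> K; only the values
   at pairs x <= y are meaningful (see [incidence] and [ieq]). *)
Definition series := P -> P -> K.

Definition incidence (a : series) : Prop :=
  forall x y, ~~ (x <= y)%O -> a x y = 0.

Definition ieq (a b : series) : Prop :=
  forall x y, (x <= y)%O -> a x y = b x y.

Definition finitary (a : series) : Prop :=
  forall x y, (x < y)%O -> exists r : seq (P * P),
    forall u v, (x <= u)%O -> (u < v)%O -> (v <= y)%O -> a u v != 0 -> (u, v) \in r.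

Definition FI (a : series) : Prop := incidence a /\ finitary a.

Definition has_fsum (f : P -> K) (s : K) : Prop :=
  exists r : seq P, [/\ uniq r, (forall z, f z != 0 -> z \in r) & s = \sum_(z <- r) f z].

(* The sum of a finitely supported family (junk value if not finitely supported). *)
Definition fsum (f : P -> K) : K := epsilon (inhabits 0) (has_fsum f).

Definition conv (a b : series) : series := fun x y =>
  fsum (fun z => if (x <= z)%O && (z <= y)%O then a x z * b z y else 0).

Definition delta : series := fun x y => if x == y then 1 else 0.

Definition diagonal (a : series) : Prop := forall x y, x != y -> a x y = 0.

End FI.

(* Let alpha be an idempotent of FI(P) and e(x) = alpha(x,x), so e(x)^2 = e(x),
   and eps = e·δ is the diagonal part of alpha.  The element
       u = e·alpha + (1 - e)·(δ - alpha)        (rows scaled by e resp. 1 - e)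
   intertwines the two idempotents: eps·u = e·alpha = u·alpha.  Its diagonal is
   e^2 + (1 - e)^2 = 1, so u = δ + n with n strictly triangular, and u is
   invertible with inverse the Neumann series sum_k (-1)^k n^k, which is a
   finite sum on every interval [x,y] because n^k vanishes there as soon as k
   exceeds the number of points met by the support of n in [x,y].  Hence
   alpha = u^-1 eps u. *)
From HB Require Import structures.
From mathcomp Require Import all_boot all_order all_algebra.
From Stdlib Require Import ClassicalEpsilon FunctionalExtensionality.
Set Implicit Arguments. Unset Strict Implicit. Unset Printing Implicit Defensive.
Import Order.TTheory GRing.Theory.
Local Open Scope ring_scope.

Lemma count_lt_witness (T : eqType) (p1 p2 : pred T) (L : seq T) z :
  (forall w, p1 w -> p2 w) -> z \in L -> p2 z -> ~~ p1 z -> (count p1 L < count p2 L)%N.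
Proof.
move=> s; elim: L => // w L IH; rewrite inE => /orP [/eqP <-|zL] p2z np1z /=.
  by rewrite (negbTE np1z) p2z add0n add1n ltnS; apply: sub_count.
rewrite -addnS; apply: leq_add; last exact: IH.
by case e: (p1 w) => //; rewrite (s w e).
Qed.

Section IncidenceAlgebra.
Variables (K : fieldType) (d : Order.disp_t) (P : porderType d).
Local Notation series := (series K P).
Local Notation δ := (@delta K d P).

Definition fin_supp (f : P -> K) :=
  exists r : seq P, uniq r /\ forall z, f z != 0 -> z \in r.

Lemma fsum_eq (f : P -> K) r : uniq r -> (forall z, f z != 0 -> z \in r) ->
  fsum f = \sum_(z <- r) f z.
Proof.
move=> ur sr.
have Hr : has_fsum f (\sum_(z <- r) f z) by exists r.
rewrite /fsum; case: (epsilon_spec (inhabits 0) (has_fsum f) (ex_intro _ _ Hr)).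
move=> r' [ur' sr' ->].
rewrite [RHS](bigID (fun z => z \in r')) /= [X in _ = _ + X]big1; last first.
  by move=> z zr; apply/eqP; apply: contraNT zr => /sr'.
rewrite [LHS](bigID (fun z => z \in r)) /= [X in _ + X = _]big1 ?add0r ?addr0; last first.
  by move=> z zr; apply/eqP; apply: contraNT zr => /sr.
rewrite -[LHS]big_filter -[RHS]big_filter; apply: perm_big.
by apply: uniq_perm; rewrite ?filter_uniq // => z; rewrite !mem_filter andbC.
Qed.

Lemma fsum0 : fsum (fun _ : P => (0 : K)) = 0.
Proof. by rewrite (@fsum_eq _ [::]) ?big_nil // => z; rewrite eqxx. Qed.

Lemma fsum_nz (f : P -> K) : fsum f != 0 -> exists z, f z != 0.
Proof.
move=> H; apply: NNPP => hn; move: H.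
suff -> : f = (fun _ => 0) by rewrite fsum0 eqxx.
apply: functional_extensionality => z; apply/eqP; apply: contraT => nz.
by exfalso; apply: hn; exists z.
Qed.

Lemma fsum_add (f g : P -> K) : fin_supp f -> fin_supp g ->
  fsum (fun z => f z + g z) = fsum f + fsum g.
Proof.
move=> [rf [uf sf]] [rg [ug sg]].
have S h : (forall z, h z != 0 -> z \in rf \/ z \in rg) ->
    forall z, h z != 0 -> z \in undup (rf ++ rg).
  by move=> Hh z /Hh [] zi; rewrite mem_undup mem_cat zi ?orbT.
rewrite !(@fsum_eq _ (undup (rf ++ rg))) ?undup_uniq ?big_split //.
- by apply: S => z /sg; right.
- by apply: S => z /sf; left.
apply: S => z nz; case: (boolP (f z != 0)) => [/sf|]; first by left.
by rewrite negbK => /eqP fz; right; apply: sg; rewrite fz add0r in nz.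
Qed.

Lemma fsum_scale (c : K) (f : P -> K) : fin_supp f ->
  fsum (fun z => c * f z) = c * fsum f.
Proof.
move=> [r [u s]]; rewrite !(@fsum_eq _ r) // ?big_distrr //.
by move=> z nz; apply: s; apply: contraNneq nz => ->; rewrite mulr0.
Qed.

Lemma ieq_eq (a b : series) : incidence a -> incidence b -> ieq a b -> a = b.
Proof.
move=> ia ib ab; apply: functional_extensionality => x.
apply: functional_extensionality => y.
by case: (boolP (x <= y)%O) => xy; [exact: ab | rewrite ia ?ib].
Qed.

Lemma conv_eq_on (a a' b b' : series) x y :
  (forall z, (x <= z)%O -> (z <= y)%O -> a x z = a' x z /\ b z y = b' z y) ->
  conv a b x y = conv a' b' x y.
Proof.
move=> H; rewrite /conv; congr fsum; apply: functional_extensionality => z.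
by case: ifP => // /andP [xz zy]; case: (H z xz zy) => -> ->.
Qed.

Lemma conv_null (a b : series) x y :
  (forall z, (x <= z)%O -> (z <= y)%O -> a x z * b z y = 0) -> conv a b x y = 0.
Proof.
move=> H; transitivity (fsum (fun _ : P => (0 : K))); last exact: fsum0.
rewrite /conv; congr fsum; apply: functional_extensionality => z.
by case: ifP => // /andP [xz zy]; exact: H.
Qed.

Lemma conv_out (a b : series) x y : ~~ (x <= y)%O -> conv a b x y = 0.
Proof. by move=> nxy; apply: conv_null => z xz zy; rewrite (le_trans xz zy) in nxy. Qed.

Lemma conv_diag (a b : series) x : conv a b x x = a x x * b x x.
Proof.
rewrite /conv (@fsum_eq _ [:: x]) // ?big_seq1 ?lexx //.
move=> z; case: ifP; rewrite ?eqxx // => /andP [xz zx] _.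
by rewrite inE eq_le zx xz.
Qed.

(* L covers a on [x,y]: both endpoints of every off-diagonal nonzero entry of
   a inside [x,y] lie in L.  Finitarity says exactly that finite covers exist. *)
Definition covers (L : seq P) (x y : P) (a : series) :=
  forall p q, (x <= p)%O -> (p < q)%O -> (q <= y)%O -> a p q != 0 ->
  (p \in L) && (q \in L).

Lemma covers_sub L1 L2 x y a : {subset L1 <= L2} -> covers L1 x y a -> covers L2 x y a.
Proof. by move=> s c p q xp pq qy nz; case/andP: (c p q xp pq qy nz) => /s -> /s. Qed.

Lemma finitary_cover (a : series) x y : finitary a -> exists L, covers L x y a.
Proof.
move=> fa; case: (boolP (x < y)%O) => xy.
  case: (fa x y xy) => r hr; exists (map fst r ++ map snd r).
  move=> p q xp pq qy nz; have pr := hr p q xp pq qy nz.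
  by rewrite !mem_cat (map_f fst pr) (map_f snd pr) orbT.
exists [::] => p q xp pq qy; exfalso.
by move: xy; rewrite (le_lt_trans xp (lt_le_trans pq qy)).
Qed.

Lemma cover_finitary (a : series) :
  (forall x y, (x < y)%O -> exists L, covers L x y a) -> finitary a.
Proof.
move=> H x y xy; case: (H x y xy) => L cL; exists [seq (p, q) | p <- L, q <- L].
move=> u v xu uv vy nz; case/andP: (cL u v xu uv vy nz) => uL vL; exact: allpairs_f.
Qed.

Lemma common_cover (As : seq series) x y : List.Forall (@finitary K d P) As ->
  exists L, [/\ uniq L, x \in L, y \in L & forall a, List.In a As -> covers L x y a].
Proof.
elim: As => [|a As IH] H.
  by exists (undup [:: x; y]); rewrite undup_uniq !mem_undup !inE !eqxx ?orbT.
have [L [uL xL yL cL]] := IH (List.Forall_inv_tail H).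
have [La cLa] := finitary_cover x y (List.Forall_inv H).
exists (undup (La ++ L)); rewrite undup_uniq !mem_undup !mem_cat xL yL !orbT.
split=> // b [<-|hb]; [apply: covers_sub cLa | apply: covers_sub (cL b hb)];
  by move=> z; rewrite mem_undup mem_cat => ->; rewrite ?orbT.
Qed.

Definition sadd (a b : series) : series := fun x y => a x y + b x y.
Definition rscale (f : P -> K) (a : series) : series := fun x y => f x * a x y.

Lemma covers_sadd L x y (a b : series) :
  covers L x y a -> covers L x y b -> covers L x y (sadd a b).
Proof.
move=> ca cb p q xp pq qy nz; case: (eqVneq (a p q) 0) => [az|]; last exact: ca.
by apply: cb => //; move: nz; rewrite /sadd az add0r.
Qed.

Lemma covers_rscale L x y f (a : series) : covers L x y a -> covers L x y (rscale f a).
Proof.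
move=> ca p q xp pq qy nz; apply: ca => //.
by apply: contraNneq nz; rewrite /rscale => ->; rewrite mulr0.
Qed.

Lemma conv_supp (a b : series) L x y u v : covers L x y a -> u \in L ->
  (x <= u)%O -> (v <= y)%O ->
  forall z, (if (u <= z)%O && (z <= v)%O then a u z * b z v else 0) != 0 -> z \in L.
Proof.
move=> cA uL xu vy z; case: ifP => [/andP [uz zv]|]; last by rewrite eqxx.
move=> nz; case: (eqVneq z u) => [->//|zu].
have uz' : (u < z)%O by rewrite lt_neqAle eq_sym zu uz.
have na : a u z != 0 by apply: contraNneq nz => ->; rewrite mul0r.
by case/andP: (cA u z xu uz' (le_trans zv vy) na).
Qed.

Lemma conv_list (a b : series) L x y u v : uniq L -> covers L x y a ->
  u \in L -> (x <= u)%O -> (v <= y)%O ->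
  conv a b u v = \sum_(z <- L) (if (u <= z)%O && (z <= v)%O then a u z * b z v else 0).
Proof. by move=> uL cA uLL xu vy; apply: fsum_eq => //; exact: (conv_supp (b := b) cA uLL xu vy). Qed.

Lemma conv_fin (a b : series) x y : FI a -> FI b ->
  fin_supp (fun z => if (x <= z)%O && (z <= y)%O then a x z * b z y else 0).
Proof.
move=> [_ fa] [_ fb].
have [L [uL xL _ cL]] := common_cover x y (As := [:: a]) (List.Forall_cons _ fa (List.Forall_nil _)).
by exists L; split=> //; exact: (conv_supp (b := b) (cL a (or_introl erefl)) xL (lexx x) (lexx y)).
Qed.

Lemma covers_conv L x y (a b : series) :
  covers L x y a -> covers L x y b -> covers L x y (conv a b).
Proof.
move=> ca cb p q xp pq qy /fsum_nz [z]; case: ifP => [/andP [pz zq]|]; last by rewrite eqxx.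
move=> nz.
have na : a p z != 0 by apply: contraNneq nz => ->; rewrite mul0r.
have nb : b z q != 0 by apply: contraNneq nz => ->; rewrite mulr0.
case: (eqVneq z p) => [ezp|nzp]; first by subst z; exact: cb p q xp pq qy nb.
have pz' : (p < z)%O by rewrite lt_neqAle eq_sym nzp pz.
have /andP [pL zL] := ca p z xp pz' (le_trans zq qy) na.
rewrite pL /=; case: (eqVneq z q) => [<-//|nzq].
have zq' : (z < q)%O by rewrite lt_neqAle nzq zq.
by case/andP: (cb z q (le_trans xp pz) zq' qy nb).
Qed.

Lemma FI_conv (a b : series) : FI a -> FI b -> FI (conv a b).
Proof.
move=> [_ fa] [_ fb]; split; first by move=> x y; exact: conv_out.
apply: cover_finitary => x y _.
have [L [_ _ _ cL]] : exists L, [/\ uniq L, x \in L, y \in L &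
    forall c, List.In c [:: a; b] -> covers L x y c] by apply: common_cover; do !constructor.
by exists L; apply: covers_conv; apply: cL; [left | right; left].
Qed.

Lemma conv_assoc (a b c : series) : FI a -> FI b -> FI c ->
  conv (conv a b) c = conv a (conv b c).
Proof.
move=> [_ fa] [_ fb] [_ fc].
apply: functional_extensionality => x; apply: functional_extensionality => y.
case: (boolP (x <= y)%O) => xy; last by rewrite !conv_out.
have [L [uL xL _ cL]] : exists L, [/\ uniq L, x \in L, y \in L &
    forall e, List.In e [:: a; b; c] -> covers L x y e] by apply: common_cover; do !constructor.
have ca : covers L x y a by apply: cL; left.
have cb : covers L x y b by apply: cL; right; left.
rewrite (conv_list _ uL (covers_conv ca cb) xL (lexx x) (lexx y)).
rewrite (conv_list _ uL ca xL (lexx x) (lexx y)).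
(* Both sides are the double sum of a(x,z) b(z,w) c(w,y) over x <= z <= w <= y. *)
transitivity (\sum_(w <- L) \sum_(z <- L)
   (if [&& (x <= z)%O, (z <= w)%O & (w <= y)%O] then a x z * b z w * c w y else 0)).
  apply: eq_big_seq => w wL; case: ifP => [/andP [xw wy]|nc].
    rewrite (conv_list _ uL ca xL (lexx x) wy) big_distrl; apply: eq_bigr => z _.
    by rewrite wy andbT; case: ifP => // _; exact: mul0r.
  rewrite big1 // => z _; case: ifP => // /and3P [xz zw wy].
  by rewrite (le_trans xz zw) wy in nc.
rewrite exchange_big; apply: eq_big_seq => z zL; case: ifP => [/andP [xz zy]|nc].
  rewrite (conv_list _ uL cb zL xz (lexx y)) big_distrr; apply: eq_bigr => w _.
  by rewrite xz /=; case: ifP => _; rewrite ?mulrA ?mulr0.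
rewrite big1 // => w _; case: ifP => // /and3P [xz zw wy].
by rewrite xz (le_trans zw wy) in nc.
Qed.

Lemma conv_addl (a b c : series) : FI a -> FI b -> FI c ->
  conv (sadd a b) c = sadd (conv a c) (conv b c).
Proof.
move=> Fa Fb Fc; apply: functional_extensionality => x; apply: functional_extensionality => y.
rewrite /sadd /conv -fsum_add; [|exact: conv_fin|exact: conv_fin].
by congr fsum; apply: functional_extensionality => z; case: ifP; rewrite ?addr0 // mulrDl.
Qed.

Lemma conv_addr (a b c : series) : FI a -> FI b -> FI c ->
  conv a (sadd b c) = sadd (conv a b) (conv a c).
Proof.
move=> Fa Fb Fc; apply: functional_extensionality => x; apply: functional_extensionality => y.
rewrite /sadd /conv -fsum_add; [|exact: conv_fin|exact: conv_fin].
by congr fsum; apply: functional_extensionality => z; case: ifP; rewrite ?addr0 // mulrDr.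
Qed.

Lemma conv_scalel f (a b : series) : FI a -> FI b ->
  conv (rscale f a) b = rscale f (conv a b).
Proof.
move=> Fa Fb; apply: functional_extensionality => x; apply: functional_extensionality => y.
rewrite /rscale /conv -fsum_scale; last exact: conv_fin.
by congr fsum; apply: functional_extensionality => z; case: ifP; rewrite ?mulr0 // mulrA.
Qed.

Lemma conv_scaler (c : K) (a b : series) : FI a -> FI b ->
  conv a (rscale (fun=> c) b) = rscale (fun=> c) (conv a b).
Proof.
move=> Fa Fb; apply: functional_extensionality => x; apply: functional_extensionality => y.
rewrite /rscale /conv -fsum_scale; last exact: conv_fin.
by congr fsum; apply: functional_extensionality => z; case: ifP; rewrite ?mulr0 // mulrCA.
Qed.

Lemma FI_delta : FI δ.
Proof.
split; first by move=> x y nxy; rewrite /delta; case: eqP => // exy; rewrite exy lexx in nxy.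
by move=> x y xy; exists [::] => u v _ uv _; rewrite /delta (lt_eqF uv) eqxx.
Qed.

Lemma FI_sadd (a b : series) : FI a -> FI b -> FI (sadd a b).
Proof.
move=> [ia fa] [ib fb]; split; first by move=> x y nxy; rewrite /sadd ia ?ib ?addr0.
apply: cover_finitary => x y _.
have [La cLa] := finitary_cover x y fa; have [Lb cLb] := finitary_cover x y fb.
exists (La ++ Lb); apply: covers_sadd.
  by apply: covers_sub cLa => z zL; rewrite mem_cat zL.
by apply: covers_sub cLb => z zL; rewrite mem_cat zL orbT.
Qed.

Lemma FI_rscale f (a : series) : FI a -> FI (rscale f a).
Proof.
move=> [ia fa]; split; first by move=> x y nxy; rewrite /rscale ia ?mulr0.
apply: cover_finitary => x y _; have [L cL] := finitary_cover x y fa.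
by exists L; apply: covers_rscale.
Qed.

Lemma conv_delta_l (a : series) : incidence a -> conv δ a = a.
Proof.
move=> ia; apply: functional_extensionality => x; apply: functional_extensionality => y.
case: (boolP (x <= y)%O) => xy; last by rewrite conv_out // ia.
rewrite /conv (@fsum_eq _ [:: x]) //; first by rewrite big_seq1 lexx xy /delta eqxx mul1r.
move=> z; case: ifP => _; last by rewrite eqxx.
by rewrite /delta; case: (eqVneq x z) => [<-|_]; rewrite ?inE ?mul0r ?eqxx.
Qed.

Lemma conv_delta_r (a : series) : incidence a -> conv a δ = a.
Proof.
move=> ia; apply: functional_extensionality => x; apply: functional_extensionality => y.
case: (boolP (x <= y)%O) => xy; last by rewrite conv_out // ia.
rewrite /conv (@fsum_eq _ [:: y]) //; first by rewrite big_seq1 lexx xy /delta eqxx mulr1.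
move=> z; case: ifP => _; last by rewrite eqxx.
by rewrite /delta; case: (eqVneq z y) => [->|_]; rewrite ?inE ?mulr0 ?eqxx.
Qed.

Lemma diag_scale (a : series) : diagonal a -> a = rscale (fun x => a x x) δ.
Proof.
move=> Da; apply: functional_extensionality => x; apply: functional_extensionality => y.
by rewrite /rscale /delta; case: eqVneq => [<-|nxy]; rewrite ?mulr1 // mulr0 Da.
Qed.

Lemma conv_diag_l f (a : series) : FI a -> conv (rscale f δ) a = rscale f a.
Proof. by move=> Fa; rewrite conv_scalel ?conv_delta_l //; [exact: Fa.1 | exact: FI_delta]. Qed.

Local Hint Resolve FI_delta : core.

(* A finitary series with unit diagonal is invertible: write u = δ + n with n
   strictly triangular and sum the Neumann series of n. *)
Section Unitriangular.
Variable u : series.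
Hypotheses (Fu : FI u) (u_diag : forall x, u x x = 1).

Definition strict : series := sadd u (rscale (fun=> -1) δ).

Lemma FI_strict : FI strict.
Proof. exact: FI_sadd Fu (FI_rscale _ FI_delta). Qed.

Lemma strict_diag x : strict x x = 0.
Proof. by rewrite /strict /sadd /rscale u_diag /delta eqxx mulN1r subrr. Qed.

Lemma u_split : u = sadd δ strict.
Proof.
apply: functional_extensionality => x; apply: functional_extensionality => y.
by rewrite /sadd /strict /sadd /rscale mulN1r addrC subrK.
Qed.

Fixpoint npow (k : nat) : series := if k is k'.+1 then conv strict (npow k') else δ.

Lemma FI_npow k : FI (npow k).
Proof. by elim: k => [|k IH] //=; apply: FI_conv => //; exact: FI_strict. Qed.
Local Hint Resolve FI_strict FI_npow : core.

Lemma npow_succ_r k : conv (npow k) strict = npow k.+1.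
Proof.
elim: k => [|k IH] /=; first by rewrite conv_delta_l ?conv_delta_r //; case: FI_strict.
by rewrite conv_assoc ?IH.
Qed.

Lemma covers_npow L x y k : covers L x y strict -> covers L x y (npow k).
Proof.
move=> cn; elim: k => [|k IH] /=; last exact: covers_conv.
by move=> p q _ pq _; rewrite /delta (lt_eqF pq) eqxx.
Qed.

(* A nonzero entry n^k(u',v) is a chain u' < z_1 < ... < z_k = v of nonzero
   entries of n, so k is at most the number of points of L in (u',v]. *)
Lemma npow_bound L x y : covers L x y strict -> forall k u' v, (x <= u')%O -> (v <= y)%O ->
  npow k u' v != 0 -> (k <= count (fun w => (u' < w)%O && (w <= v)%O) L)%N.
Proof.
move=> cn k; elim: k => [//|k IH] u' v xu vy /= /fsum_nz [z].
case: ifP => [/andP [uz zv]|]; last by rewrite eqxx.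
move=> nz.
have na : strict u' z != 0 by apply: contraNneq nz => ->; rewrite mul0r.
have nb : npow k z v != 0 by apply: contraNneq nz => ->; rewrite mulr0.
have uz' : (u' < z)%O.
  by rewrite lt_neqAle uz andbT; apply: contraNneq na => <-; rewrite strict_diag.
have /andP [_ zL] := cn u' z xu uz' (le_trans zv vy) na.
apply: leq_ltn_trans (IH z v (le_trans xu uz) vy nb) _.
(* z is counted for u' but not for z itself. *)
apply: (count_lt_witness (z := z)) => //.
- by move=> w /andP [zw wv]; rewrite (lt_trans uz' zw) wv.
- by rewrite uz' zv.
- by rewrite ltxx.
Qed.

Lemma npow_vanish L x y u' v k : covers L x y strict -> (x <= u')%O -> (v <= y)%O ->
  (size L < k)%N -> npow k u' v = 0.
Proof.
move=> cn xu vy Lk; apply/eqP; apply: contraT => nz.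
have := leq_trans (npow_bound cn xu vy nz) (count_size _ _).
by rewrite leqNgt Lk.
Qed.

Lemma npow_eventually x y : exists N, forall k, (N <= k)%N -> npow k x y = 0.
Proof.
have [L cL] := finitary_cover x y FI_strict.2.
by exists (size L).+1 => k; apply: (npow_vanish cL (lexx x) (lexx y)).
Qed.

Definition geom (M : nat) : series := fun x y => \sum_(k < M) (-1) ^+ k * npow k x y.

Lemma geomS M : geom M.+1 = sadd (geom M) (rscale (fun=> (-1) ^+ M) (npow M)).
Proof.
apply: functional_extensionality => x; apply: functional_extensionality => y.
by rewrite /geom big_ord_recr.
Qed.

Lemma FI_geom M : FI (geom M).
Proof.
elim: M => [|M IH]; last by rewrite geomS; apply: FI_sadd => //; exact: FI_rscale.
split; first by move=> x y _; rewrite /geom big_ord0.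
by move=> x y _; exists [::] => p q _ _ _; rewrite /geom big_ord0 eqxx.
Qed.
Local Hint Resolve FI_geom : core.

Lemma covers_geom L x y M : covers L x y strict -> covers L x y (geom M).
Proof.
move=> cn; elim: M => [|M IH]; first by move=> p q _ _ _; rewrite /geom big_ord0 eqxx.
by rewrite geomS; apply: covers_sadd => //; apply: covers_rscale; exact: covers_npow.
Qed.

Lemma conv_u_geom M x y : conv u (geom M) x y = δ x y - (-1) ^+ M * npow M x y.
Proof.
elim: M => [|M IH].
  by rewrite conv_null ?expr0 ?mul1r ?subrr // => z _ _; rewrite /geom big_ord0 mulr0.
have u_npow : conv u (npow M) = sadd (npow M) (npow M.+1).
  by rewrite {1}u_split conv_addl ?conv_delta_l //; case: (FI_npow M).
rewrite geomS conv_addr ?conv_scaler //; last exact: FI_rscale.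
rewrite /sadd /rscale IH u_npow /sadd.
by rewrite exprS mulrDr addrA subrK mulN1r mulNr opprK.
Qed.

Lemma conv_geom_u M x y : conv (geom M) u x y = δ x y - (-1) ^+ M * npow M x y.
Proof.
elim: M => [|M IH].
  by rewrite conv_null ?expr0 ?mul1r ?subrr // => z _ _; rewrite /geom big_ord0 mul0r.
have npow_u : conv (npow M) u = sadd (npow M) (npow M.+1).
  by rewrite {1}u_split conv_addr ?conv_delta_r ?npow_succ_r //; case: (FI_npow M).
rewrite geomS conv_addl ?conv_scalel //; last exact: FI_rscale.
rewrite /sadd /rscale IH npow_u /sadd.
by rewrite exprS mulrDr addrA subrK mulN1r mulNr opprK.
Qed.

Lemma geom_stable x y N M : (forall k, (N <= k)%N -> npow k x y = 0) -> (N <= M)%N ->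
  geom M x y = geom N x y.
Proof.
move=> HN; elim: M => [|M IH]; first by rewrite leqn0 => /eqP ->.
rewrite leq_eqVlt => /orP [/eqP -> //|]; rewrite ltnS => NM.
by rewrite geomS /sadd /rscale HN // mulr0 addr0 IH.
Qed.

(* The inverse of u: at each (x,y), the Neumann series stopped at a chosen
   index beyond which the powers of n vanish at (x,y). *)
Definition nil_index x y : nat :=
  epsilon (inhabits 0%N) (fun N => forall k, (N <= k)%N -> npow k x y = 0).

Definition inverse : series := fun x y => geom (nil_index x y) x y.

Lemma inverseE x y M : (forall k, (M <= k)%N -> npow k x y = 0) -> inverse x y = geom M x y.
Proof.
move=> HM; have HB := epsilon_spec (inhabits 0%N) _ (npow_eventually x y).
rewrite /inverse -(geom_stable HB (leq_maxr M (nil_index x y))).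
exact: geom_stable HM (leq_maxl _ _).
Qed.

Lemma inverse_on L x y z w : covers L x y strict -> (x <= z)%O -> (w <= y)%O ->
  inverse z w = geom (size L).+1 z w.
Proof. by move=> cn xz wy; apply: inverseE => k; apply: npow_vanish cn xz wy. Qed.

Lemma FI_inverse : FI inverse.
Proof.
split; first by move=> x y nxy; rewrite /inverse (FI_geom _).1.
apply: cover_finitary => x y _; have [L cL] := finitary_cover x y FI_strict.2.
exists L => p q xp pq qy; rewrite /inverse; exact: covers_geom cL p q xp pq qy.
Qed.

(* On [x,y] the inverse agrees with g_(|L|+1), whose products with u are
   δ - (-1)^M n^M = δ there. *)
Lemma inverse_r : ieq (conv u inverse) δ.
Proof.
move=> x y _; have [L cL] := finitary_cover x y FI_strict.2.
rewrite (@conv_eq_on u u inverse (geom (size L).+1)); last first.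
  by move=> z xz _; split=> //; exact: inverse_on cL xz (lexx y).
by rewrite conv_u_geom (npow_vanish cL (lexx x) (lexx y)) ?mulr0 ?subr0.
Qed.

Lemma inverse_l : ieq (conv inverse u) δ.
Proof.
move=> x y _; have [L cL] := finitary_cover x y FI_strict.2.
rewrite (@conv_eq_on inverse (geom (size L).+1) u u); last first.
  by move=> z _ zy; split=> //; exact: inverse_on cL (lexx x) zy.
by rewrite conv_geom_u (npow_vanish cL (lexx x) (lexx y)) ?mulr0 ?subr0.
Qed.

Lemma unitriangular_inverse : exists b, [/\ FI b, conv u b = δ & conv b u = δ].
Proof.
exists inverse; split; first exact: FI_inverse.
  by apply: ieq_eq inverse_r; [move=> x y; exact: conv_out | case: FI_delta].
by apply: ieq_eq inverse_l; [move=> x y; exact: conv_out | case: FI_delta].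
Qed.

End Unitriangular.

Lemma conj_of_intertwining (alpha eps u b : series) :
  FI alpha -> FI eps -> FI u -> FI b ->
  conv b u = δ -> conv eps u = conv u alpha -> alpha = conv (conv b eps) u.
Proof.
move=> Fa Fe Fu Fb bu intw.
by rewrite conv_assoc // intw -conv_assoc // bu conv_delta_l //; case: Fa.
Qed.

Section Idempotent.
Variable alpha : series.
Hypotheses (Fa : FI alpha) (alpha_idem : ieq (conv alpha alpha) alpha).

Let e x := alpha x x.

Lemma alpha2 : conv alpha alpha = alpha.
Proof. by apply: ieq_eq alpha_idem; [move=> x y; exact: conv_out | case: Fa]. Qed.

Lemma diag_idem x : e x * e x = e x.
Proof. by rewrite /e -conv_diag alpha2. Qed.

Lemma diag_orth x : e x * (1 - e x) = 0.
Proof. by rewrite mulrBr mulr1 diag_idem subrr. Qed.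

Definition intertwiner : series :=
  sadd (rscale e alpha) (rscale (fun x => 1 - e x) (sadd δ (rscale (fun=> -1) alpha))).

Lemma FI_intertwiner : FI intertwiner.
Proof. by apply: FI_sadd; apply: FI_rscale => //; apply: FI_sadd => //; exact: FI_rscale. Qed.

(* Diagonal entries: e^2 + (1 - e)^2 = e + (1 - e) = 1. *)
Lemma intertwiner_diag x : intertwiner x x = 1.
Proof.
rewrite /intertwiner /sadd /rscale /delta eqxx -/(e x) mulN1r diag_idem.
by rewrite mulrBl mul1r diag_orth subr0 addrC subrK.
Qed.

(* eps u = e·u = e·alpha, using e^2 = e and e (1 - e) = 0. *)
Lemma intertwiner_left : conv (rscale e δ) intertwiner = rscale e alpha.
Proof.
rewrite conv_diag_l; last exact: FI_intertwiner.
apply: functional_extensionality => x; apply: functional_extensionality => y.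
by rewrite /intertwiner /rscale /sadd mulrDr !mulrA diag_idem diag_orth mul0r addr0.
Qed.

(* u alpha = e·alpha^2 + (1 - e)·(alpha - alpha^2) = e·alpha. *)
Lemma intertwiner_right : conv intertwiner alpha = rscale e alpha.
Proof.
have Fn : FI (rscale (fun=> -1) alpha) by exact: FI_rscale.
have Fm : FI (sadd δ (rscale (fun=> -1) alpha)) by exact: FI_sadd.
rewrite conv_addl ?conv_scalel //; try exact: FI_rscale.
rewrite conv_addl ?conv_scalel ?conv_delta_l ?alpha2 //; last by case: Fa.
apply: functional_extensionality => x; apply: functional_extensionality => y.
by rewrite /sadd /rscale mulN1r subrr mulr0 addr0.
Qed.

End Idempotent.

End IncidenceAlgebra.

Theorem theorem3 (K : fieldType) (d : Order.disp_t) (P : porderType d)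
    (alpha eps : series K P) :
  FI alpha ->
  ieq (conv alpha alpha) alpha ->
  diagonal eps -> incidence eps ->
  (forall x : P, eps x x = alpha x x) ->
  ieq (conv eps eps) eps /\
  exists beta beta' : series K P,
    [/\ FI beta, FI beta',
        ieq (conv beta beta') (@delta K d P),
        ieq (conv beta' beta) (@delta K d P)
      & ieq alpha (conv (conv beta' eps) beta)].
Proof.
move=> Fa idem Deps _ eps_diag.
have Eeps : eps = rscale (fun x => alpha x x) (@delta K d P).
  by rewrite {1}(diag_scale Deps); congr rscale; exact: functional_extensionality.
have Fe : FI eps by rewrite Eeps; apply: FI_rscale; exact: FI_delta.
have Fu := FI_intertwiner Fa.
have [b [Fb ub bu]] := unitriangular_inverse Fu (intertwiner_diag Fa idem).
split.
  move=> x y _; rewrite {1}Eeps conv_diag_l // Eeps /rscale mulrA.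
  by rewrite (diag_idem Fa idem).
exists (intertwiner alpha), b; split=> //; try by move=> x y _; rewrite ?ub ?bu.
move=> x y _; rewrite -(conj_of_intertwining Fa Fe Fu Fb bu) // Eeps.
by rewrite (intertwiner_left Fa idem) (intertwiner_right Fa idem).
Qed.
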